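(* Let $G$, $P$, $n$, $\alpha$, $n'$, $\zeta$, $\mathcal C_{\mathrm{pool}}$ and $P(\mathbf c)$ be as in the context, and let $\bar P_{\max}=\max_{\mathbf c\in\mathcal C_{\mathrm{pool}}}P(\mathbf c)$. Then $$\bar P_{\max}\le\frac{2^{-2\alpha n\zeta\sum_{e\in E}\log_2 p(\tau(e)\mid\sigma(e))}}{|\mathcal C_{\mathrm{pool}}|}.$$
   Context: $G=(V,E,L)$ is a deterministic, lossless, primitive labeled directed graph over a finite alphabet $\Sigma$; edge $e$ has initial vertex $\sigma(e)$, terminal vertex $\tau(e)$, label $L(e)$. $P$ is a probability mass function on $E$ with $P(e)>0$ for all $e$, stationary: with $\pi(u)=\sum_{e:\sigma(e)=u}P(e)$, $\pi(u)=\sum_{e:\tau(e)=u}P(e)$. Write $p(\tau(e)\mid\sigma(e))=P(e)/\pi(\sigma(e))$; $P_{\min}=\min_eP(e)$. $n$ is a positive integer with $nP(e)\in\mathbb Z$ for all $e$; $\alpha\in(0,1)$, $n'=\lfloor\alpha n\rfloor$, $0<\zeta<\frac{1-\alpha}{\alpha}P_{\min}$, $v_{\mathrm{root}}\in V$ fixed. $\mathcal W$ is the set of paths $\mathbf w=(e_1,\dots,e_{n'})$ with $\sigma(e_1)=v_{\mathrm{root}}$ and $|S_{\mathbf w}(e)/n'-P(e)|<\zeta$ for all $e$, where $S_{\mathbf w}(e)$ counts occurrences of $e$ in $\mathbf w$. For $\mathbf w\in\mathcal W$ ending at $v_{\mathrm{end}}$, the multigraph with $nP(e)-S_{\mathbf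 w}(e)>0$ copies of each $e$ has an Eulerian path from $v_{\mathrm{end}}$ to $v_{\mathrm{root}}$; $\Phi(\mathbf w)$ is the lexicographically first. $\mathcal C_{\mathrm{pool}}=\{L(\mathbf w\|\Phi(\mathbf w)):\mathbf w\in\mathcal W\}$; each codeword $\mathbf c$ has a unique prefix $\mathbf w$, and $P(\mathbf c)=\prod_{i=1}^{n'}p(\tau(e_i)\mid\sigma(e_i))$, the probability that a length-$n'$ random walk governed by $P$ from $v_{\mathrm{root}}$ (choosing edge $e$ out of $u$ with probability $P(e)/\pi(u)$) equals that prefix. *)

From HB Require Import structures.
From mathcomp Require Import all_boot all_order all_algebra.
From mathcomp Require Import reals exp.
Set Implicit Arguments. Unset Strict Implicit. Unset Printing Implicit Defensive.
Import Order.TTheory GRing.Theory Num.Theory.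

Section Graph.
Variables (V E : finType) (sig tau : E -> V).

Definition conn (e f : E) : bool := tau e == sig f.
Definition walk (s : seq E) : bool := sorted conn s.
Definition walk_from_to (u v : V) (s : seq E) : bool :=
  match s with
  | [::] => u == v
  | e :: s' => [&& sig e == u, walk s & tau (last e s') == v]
  end.

Definition deterministic (S : eqType) (L : E -> S) : Prop :=
  forall e f, sig e = sig f -> L e = L f -> e = f.
Definition lossless (S : eqType) (L : E -> S) : Prop :=
  forall u v (s t : seq E), walk_from_to u v s -> walk_from_to u v t ->
    map L s = map L t -> s = t.
(* primitive: some positive power of the adjacency matrix is positive, i.e.
   for some k > 0 any two vertices are joined by a path of length k *)
Definition primitive : Prop :=
  exists k, (0 < k)%N /\
    forall u v : V, exists s : seq E, size s = k /\ walk_from_to u v s.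

Definition occ (w : seq E) (e : E) : nat := count_mem e w.
(* initial vertex of the multigraph path: v_end (v_root if w is empty) *)
Definition end_vertex (vroot : V) (w : seq E) : V :=
  match w with [::] => vroot | e :: w' => tau (last e w') end.

Fixpoint lexle (s t : seq nat) : bool :=
  match s, t with
  | [::], _ => true
  | _ :: _, [::] => false
  | x :: s', y :: t' => (x < y)%N || ((x == y) && lexle s' t')
  end.

Section Prob.
Variable R : realType.
Local Open Scope ring_scope.
Variable P : E -> R.

Definition pi_v (u : V) : R := \sum_(e : E | sig e == u) P e.
Definition ptrans (e : E) : R := P e / pi_v (sig e).
Definition Pmin : R :=
  if [pick e : E] is Some e0 then \big[Order.min/P e0]_(e : E) P e else 0.
Definition Ppath (w : seq E) : R := \prod_(e <- w) ptrans e.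

Definition stationary_pmf : Prop :=
  [/\ forall e, 0 < P e, \sum_e P e = 1 &
      forall u : V, pi_v u = \sum_(e : E | tau e == u) P e].
End Prob.

Section Code.
Variables (R : realType) (P : E -> R) (mult : E -> nat) (n : nat)
  (alpha zeta : R) (vroot : V) (rank : E -> nat).
Local Open Scope ring_scope.

Definition nprime : nat := Num.truncn (alpha * n%:R).

Definition Wset : {set nprime.-tuple E} :=
  [set w : nprime.-tuple E |
     [&& walk w, (if tval w is e :: _ then sig e == vroot else true) &
         [forall e : E, `| (occ w e)%:R / nprime%:R - P e | < zeta]]].

(* Eulerian path in the residual multigraph (mult e - S_w(e) copies of e)
   from v_end to v_root *)
Definition eulerian (w s : seq E) : bool :=
  walk_from_to (end_vertex vroot w) vroot s &&
  [forall e : E, occ s e == (mult e - occ w e)%N].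

Definition Phi (w : seq E) : seq E :=
  match [pick t : (n - nprime).-tuple E |
           eulerian w t &&
           [forall t' : (n - nprime).-tuple E,
              eulerian w t' ==> lexle (map rank t) (map rank t')]] with
  | Some t => tval t
  | None => [::]
  end.

Definition codeword (S : eqType) (L : E -> S) (w : seq E) : seq S :=
  map L (w ++ Phi w).

Definition Cpool (S : eqType) (L : E -> S) : seq (seq S) :=
  undup [seq codeword L (tval w) | w in Wset].
Definition card_Cpool (S : eqType) (L : E -> S) : nat := size (Cpool L).
End Code.
End Graph.

(* Along any walk, p(w) = exp (sum_e S_w(e) ln p(e)).  Two prefixes in W
   have edge counts within 2 zeta n' <= 2 alpha n zeta of each other and
   every ln p(e) is <= 0, so their probabilities differ by at most the factor
   K = 2^(-2 alpha n zeta sum_e log2 p(e)).  The prefixes are distinct walks of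
   length n' from v_root, so their probabilities sum to at most 1; hence
   p(w) |W| <= K, and |C_pool| <= |W| since every codeword comes from a
   prefix. *)
From HB Require Import structures.
From mathcomp Require Import all_boot all_order all_algebra.
From mathcomp Require Import reals exp sequences.
From mathcomp Require Import ring lra.
Set Implicit Arguments. Unset Strict Implicit. Unset Printing Implicit Defensive.
Import Order.TTheory GRing.Theory Num.Theory.
Local Open Scope ring_scope.

Lemma ler_sum_uniq_subset (R : numDomainType) (T : eqType) (s s' : seq T)
    (F : T -> R) :
  uniq s -> uniq s' -> {subset s <= s'} -> (forall x, 0 <= F x) ->
  \sum_(x <- s) F x <= \sum_(x <- s') F x.
Proof.
move=> us us' ss' F_ge0.
have -> : \sum_(x <- s) F x = \sum_(x <- s' | x \in s) F x.
  rewrite -[in RHS]big_filter; apply: perm_big; apply: uniq_perm => //.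
    exact: filter_uniq.
  by move=> x; rewrite mem_filter andb_idr //; apply: ss'.
by rewrite [X in _ <= X](bigID (mem s)) /= lerDl sumr_ge0.
Qed.

(* The bounds [a, b <= m] make the case [m = 0], where [x / 0 = 0], trivial. *)
Lemma close_frequencies_count_gap (R : realFieldType) (m a b : nat) (p z : R) :
  (a <= m)%N -> (b <= m)%N ->
  `|a%:R / m%:R - p| < z -> `|b%:R / m%:R - p| < z ->
  b%:R - a%:R <= 2 * z * m%:R.
Proof.
move=> am bm; have [m0 | m_gt0] := posnP m.
  by move: am bm; rewrite m0 !leqn0 => /eqP-> /eqP->; rewrite subrr mulr0.
have m_gt0' : 0 < m%:R :> R by rewrite ltr0n.
rewrite !ltr_norml => /andP[la ua] /andP[lb ub].
have gap : b%:R / m%:R - a%:R / m%:R <= 2 * z by lra.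
by rewrite -(divfK (lt0r_neq0 m_gt0') a%:R) -(divfK (lt0r_neq0 m_gt0') b%:R)
  -mulrBl ler_wpM2r // ltW.
Qed.

Lemma powR_div_ln (R : realType) (a x : R) : 1 < a -> a `^ (x / ln a) = expR x.
Proof.
move=> a_gt1; have a_neq0 : a != 0 by rewrite gt_eqF // (lt_trans ltr01).
by rewrite /powR (negbTE a_neq0) divfK // gt_eqF // ln_gt0.
Qed.

Section RandomWalk.
Variables (R : realType) (V E : finType) (sig tau : E -> V) (P : E -> R).
Hypothesis P_gt0 : forall e, 0 < P e.

Fixpoint walk_from (u : V) (s : seq E) : bool :=
  if s is e :: s' then (sig e == u) && walk_from (tau e) s' else true.

Fixpoint walks (m : nat) (u : V) : seq (seq E) :=
  if m is m'.+1 then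
    [seq e :: s | e <- [seq e <- index_enum E | sig e == u],
                  s <- walks m' (tau e)]
  else [:: [::]].

Lemma walk_from_walk (u : V) (s : seq E) :
  walk sig tau s -> (if s is e :: _ then sig e == u else true) ->
  walk_from u s.
Proof.
elim: s u => [|e s IHs] u //= path_s sig_e; rewrite sig_e /=.
apply: IHs; first exact: path_sorted path_s.
by case: s path_s => //= f s /andP[conn_ef _]; rewrite eq_sym.
Qed.

Lemma mem_walks (u : V) (s : seq E) : walk_from u s -> s \in walks (size s) u.
Proof.
elim: s u => [|e s IHs] u /=; first by rewrite mem_seq1.
move=> /andP[/eqP sig_e walk_s].
apply: (@allpairs_f_dep _ (fun _ => seq E : eqType)); last exact: IHs.
by rewrite mem_filter sig_e eqxx mem_index_enum.
Qed.

Lemma walks_uniq (m : nat) (u : V) : uniq (walks m u).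
Proof.
elim: m u => [|m IHm] u //=.
apply: (@allpairs_uniq_dep _ (fun _ => seq E : eqType)).
- exact: filter_uniq (index_enum_uniq E).
- by move=> e _; apply: IHm.
- by move=> [e s] [e' s'] _ _ /= [-> ->].
Qed.

Lemma P_le_pi_v (e : E) : P e <= pi_v sig P (sig e).
Proof.
by rewrite /pi_v (bigD1 e) //= lerDl sumr_ge0 // => f _; apply: ltW.
Qed.

Lemma ptrans_gt0 (e : E) : 0 < ptrans sig P e.
Proof. by rewrite divr_gt0 // (lt_le_trans (P_gt0 e) (P_le_pi_v e)). Qed.

Lemma ptrans_le1 (e : E) : ptrans sig P e <= 1.
Proof.
rewrite ler_pdivrMr ?mul1r ?P_le_pi_v //.
exact: lt_le_trans (P_gt0 e) (P_le_pi_v e).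
Qed.

Lemma sum_Ppath_walks_le1 (m : nat) (u : V) :
  \sum_(s <- walks m u) Ppath sig P s <= 1.
Proof.
elim: m u => [|m IHm] u /=; first by rewrite big_seq1 /Ppath big_nil.
rewrite big_allpairs_dep /=.
apply: le_trans (_ : \sum_(e <- index_enum E | sig e == u)
                       ptrans sig P e <= 1); last first.
  have [pi0 | pi_neq0] := eqVneq (pi_v sig P u) 0.
    by rewrite big1 // => e /eqP sig_e; rewrite /ptrans sig_e pi0 invr0 mulr0.
  rewrite (eq_bigr (fun e => P e / pi_v sig P u)); last by move=> e /eqP <-.
  by rewrite -mulr_suml divff.
rewrite big_filter; apply: ler_sum => e _.
under eq_bigr do rewrite /Ppath big_cons.
by rewrite -mulr_sumr ler_piMr ?IHm ?ltW ?ptrans_gt0.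
Qed.

Lemma Ppath_expR (s : seq E) :
  Ppath sig P s = expR (\sum_(e : E) (occ s e)%:R * ln (ptrans sig P e)).
Proof.
elim: s => [|x s IHs].
  by rewrite /Ppath big_nil big1 ?expR0 // => e _; rewrite mul0r.
rewrite /Ppath big_cons -/(Ppath sig P s) IHs.
rewrite [in RHS](eq_bigr (fun e => (x == e)%:R * ln (ptrans sig P e) +
  (occ s e)%:R * ln (ptrans sig P e))); last first.
  by move=> e _; rewrite /occ /= natrD mulrDl.
rewrite big_split expRD; congr (_ * _).
rewrite (bigD1 x) //= eqxx mul1r big1 ?addr0.
  by rewrite lnK // posrE ptrans_gt0.
by move=> e; rewrite eq_sym => /negbTE->; rewrite mul0r.
Qed.

Lemma Ppath_ge0 (s : seq E) : 0 <= Ppath sig P s.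
Proof. by rewrite Ppath_expR expR_ge0. Qed.

Lemma Ppath_le_expR_Ppath (s t : seq E) (D : R) :
  (forall e, (occ t e)%:R - D <= (occ s e)%:R) ->
  Ppath sig P s <=
    expR (- (D * \sum_(e : E) ln (ptrans sig P e))) * Ppath sig P t.
Proof.
move=> occ_close; rewrite !Ppath_expR -expRD ler_expR.
rewrite mulr_sumr -sumrN -big_split ler_sum // => e _.
have ln_le0 : ln (ptrans sig P e) <= 0 by apply: ln_le0; apply: ptrans_le1.
apply: le_trans (ler_wnM2r ln_le0 (occ_close e)) _.
by rewrite /= mulrBl addrC.
Qed.

End RandomWalk.

Section CodebookPool.
Variables (R : realType) (V E Sigma : finType) (sig tau : E -> V)
  (L : E -> Sigma) (P : E -> R) (mult : E -> nat) (n : nat)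
  (alpha zeta : R) (vroot : V) (rank : E -> nat).
Hypotheses (P_gt0 : forall e, 0 < P e) (alpha_ge0 : 0 <= alpha)
  (zeta_ge0 : 0 <= zeta).

Local Notation m := (nprime n alpha).
Local Notation W := (Wset sig tau P n alpha zeta vroot).

Lemma occ_Wset_gap (w1 w2 : m.-tuple E) (e : E) :
  w1 \in W -> w2 \in W ->
  (occ w2 e)%:R - 2 * alpha * n%:R * zeta <= (occ w1 e)%:R :> R.
Proof.
rewrite !inE => /and3P[_ _ /forallP freq1] /and3P[_ _ /forallP freq2].
have occ_le (t : m.-tuple E) : (occ t e <= m)%N.
  by rewrite -[X in (_ <= X)%N](size_tuple t) count_size.
have m_le : m%:R <= alpha * n%:R by rewrite truncn_le mulr_ge0.
have gap := close_frequencies_count_gap (occ_le w1) (occ_le w2)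
  (freq1 e) (freq2 e).
rewrite lerBlDr -lerBlDl; apply: le_trans gap _.
have -> : 2 * alpha * n%:R * zeta = 2 * zeta * (alpha * n%:R) by ring.
by rewrite ler_wpM2l ?mulr_ge0.
Qed.

Lemma sum_Ppath_Wset_le1 : \sum_(w in W) Ppath sig P w <= 1.
Proof.
rewrite -big_enum -(big_map val predT (Ppath sig P)).
apply: le_trans (sum_Ppath_walks_le1 sig tau P_gt0 m vroot).
apply: ler_sum_uniq_subset; last exact: Ppath_ge0.
- by rewrite map_inj_uniq ?enum_uniq //; apply: val_inj.
- exact: walks_uniq.
move=> s /mapP[w]; rewrite mem_enum inE => /and3P[walk_w root_w _] ->.
by have := mem_walks (walk_from_walk walk_w root_w); rewrite size_tuple.
Qed.

Lemma Ppath_mul_card_Wset_le (w : m.-tuple E) : w \in W ->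
  Ppath sig P w * #|W|%:R <=
    expR (- (2 * alpha * n%:R * zeta * \sum_(e : E) ln (ptrans sig P e))).
Proof.
move=> w_in; set K := expR _.
rewrite mulr_natr -sumr_const.
apply: le_trans (_ : \sum_(w' in W) K * Ppath sig P w' <= _).
  apply: ler_sum => w' w'_in; apply: Ppath_le_expR_Ppath => // e.
  exact: occ_Wset_gap.
by rewrite -mulr_sumr ler_piMr ?expR_ge0 ?sum_Ppath_Wset_le1.
Qed.

Lemma card_Cpool_le_Wset :
  (card_Cpool sig tau P mult n alpha zeta vroot rank L <= #|W|)%N.
Proof. by apply: leq_trans (size_undup _) _; rewrite size_image. Qed.

End CodebookPool.

Theorem claim2 (R : realType) (V E Sigma : finType)
  (sig tau : E -> V) (L : E -> Sigma) (P : E -> R)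
  (n : nat) (mult : E -> nat) (alpha zeta : R) (vroot : V)
  (rank : E -> nat) :
  deterministic sig L ->
  lossless sig tau L ->
  primitive sig tau ->
  stationary_pmf sig tau P ->
  (0 < n)%N ->
  (forall e, n%:R * P e = (mult e)%:R) ->
  0 < alpha < 1 ->
  0 < zeta -> zeta < (1 - alpha) / alpha * Pmin P ->
  injective rank ->
  forall c, c \in Cpool sig tau P mult n alpha zeta vroot rank L ->
  forall w, w \in Wset sig tau P n alpha zeta vroot ->
  codeword sig tau mult n alpha vroot rank L (tval w) = c ->
  Ppath sig P (tval w) <=
    powR 2 (- (2 * alpha * n%:R * zeta *
                \sum_(e : E) (ln (ptrans sig P e) / ln 2)))
    / (card_Cpool sig tau P mult n alpha zeta vroot rank L)%:R.
Proof.
move=> _ _ _ [P_gt0 _ _] _ _ /andP[alpha_gt0 _] zeta_gt0 _ _ c c_in w w_in _.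
have card_gt0 : 0 < (card_Cpool sig tau P mult n alpha zeta vroot rank L)%:R :> R.
  by rewrite ltr0n /card_Cpool; case: Cpool c_in.
rewrite -mulr_suml mulrA -mulNr powR_div_ln ?ltr1n // ler_pdivlMr //.
apply: le_trans (Ppath_mul_card_Wset_le P_gt0 (ltW alpha_gt0) (ltW zeta_gt0) w_in).
by rewrite ler_wpM2l ?ler_nat ?card_Cpool_le_Wset ?Ppath_ge0.
Qed.
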